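(* Let $X$ be a real Hilbert space and let $A,B$ be closed convex nonempty subsets of $X$ such that $A\cap B$ is bounded and nonempty. Suppose the couple $(A,B)$ is regular. Then for every choice of sequences $\{A_n\},\{B_n\}$ of closed convex nonempty subsets of $X$ converging in the Attouch–Wets sense to $A$ and $B$ respectively, and every $a_0\in X$, the perturbed alternating projections sequences $\{a_n\},\{b_n\}$ satisfy $\mathrm{dist}(a_n,A\cap B)\to0$ and $\mathrm{dist}(b_n,A\cap B)\to0$.
   Context: $P_C$ is the metric projection onto a closed convex nonempty set $C$; $B_X$ the closed unit ball; $\mathrm{dist}(x,S)=\inf_{s\in S}\|x-s\|$. Since $A\cap B\neq\emptyset$, regularity of $(A,B)$ means: for each $\epsilon>0$ there is $\delta>0$ such that $\mathrm{dist}(x,A\cap B)\le\epsilon$ whenever $x\in X$ and $\max\{\mathrm{dist}(x,A),\mathrm{dist}(x,B)\}\le\delta$. Attouch–Wets convergence: for nonempty closed $C,D$ and $N\in\mathbb N$ let $e_N(C,D)=\sup_{c\in C\cap NB_X}\mathrm{dist}(c,D)$ ($0$ if $C\cap NB_X=\emptyset$) and $h_N(C,D)=\max\{e_N(C,D),e_N(D,C)\}$; $C_j\to C$ if $\lim_j h_N(C_j,C)=0$ for every $N\in\mathbb N$. The perturbed alternating projections sequences with starting point $a_0$ are defined by $b_n=P_{B_n}(a_{n-1})$ and $a_n=P_{A_n}(b_n)$ for $n\in\mathbb N$. *)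

From HB Require Import structures.
From mathcomp Require Import all_boot all_order all_algebra.
From mathcomp Require Import all_classical all_reals all_analysis.
Set Implicit Arguments. Unset Strict Implicit. Unset Printing Implicit Defensive.
Import Order.TTheory GRing.Theory Num.Theory.
Import numFieldNormedType.Exports.
Local Open Scope classical_set_scope.
Local Open Scope ring_scope.

(* The norm of V is induced by the inner product ip: ip is a symmetric
   bilinear form with |x|^2 = ip x x (so it is positive definite).
   A real Hilbert space is a complete normed space (completeNormedModType)
   carrying such an inner product. *)
Definition inner_product (R : realType) (V : normedModType R)
  (ip : V -> V -> R) : Prop :=
  [/\ (forall x y, ip x y = ip y x),
      (forall a x y z, ip (a *: x + y) z = a * ip x z + ip y z)
    & (forall x, `|x| ^+ 2 = ip x x)].

Definition dist (R : realType) (V : normedModType R) (x : V) (S : set V) : R :=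
  inf [set `|x - s| | s in S].

Definition ccn (R : realType) (V : normedModType R) (C : set V) : Prop :=
  [/\ closed C, convex_set (C : set (convex_lmodType V)) & C !=set0].

Definition proj (R : realType) (V : normedModType R) (C : set V) (x : V) : V :=
  xget 0 [set p | C p /\ `|x - p| = dist x C].

(* e_N(C,D) = sup_{c in C cap N B_X} dist(c,D), and 0 if C cap N B_X = empty
   (dist >= 0, so adjoining 0 to the set implements the convention). *)
Definition excess (R : realType) (V : normedModType R) (N : nat) (C D : set V) : R :=
  sup ([set dist c D | c in C `&` [set x | `|x| <= N%:R]] `|` [set 0]).

Definition hN (R : realType) (V : normedModType R) (N : nat) (C D : set V) : R :=
  Num.max (excess N C D) (excess N D C).

Definition AW_cvg (R : realType) (V : normedModType R) (Cs : nat -> set V) (C : set V) : Prop :=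
  forall N : nat, (fun j => hN N (Cs j) C) @ \oo --> (0 : R).

Definition regular (R : realType) (V : normedModType R) (A B : set V) : Prop :=
  forall eps : R, 0 < eps -> exists2 delta : R, 0 < delta &
    forall x : V, Num.max (dist x A) (dist x B) <= delta -> dist x (A `&` B) <= eps.

Fixpoint pap_a (R : realType) (V : normedModType R) (As Bs : nat -> set V) (a0 : V) (n : nat) : V :=
  match n with
  | 0 => a0
  | m.+1 => proj (As m.+1) (proj (Bs m.+1) (pap_a As Bs a0 m))
  end.

(* b_n for n >= 1 (the value at n = 0 is irrelevant) *)
Definition pap_b (R : realType) (V : normedModType R) (As Bs : nat -> set V) (a0 : V) (n : nat) : V :=
  proj (Bs n) (pap_a As Bs a0 n.-1).

(* In a Hilbert space the metric projection a = P_S(x) onto a closed convex set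
   satisfies |y - a|^2 + |x - a|^2 <= |x - y|^2 for every y in S.  Write
   C = A ∩ B.  Once every point of C is eta-close to A_n and B_n, this makes a
   step x -> b = P_{B_n}(x) -> a = P_{A_n}(b) almost Fejér monotone:
   (dist(a,C) - eta)^2 + |a - b|^2 <= (dist(x,C) + 3 eta)^2.  Regularity of
   (A,B), transported to (A_n,B_n) by Attouch-Wets convergence on a large ball,
   gives kappa dist(a,C) <= dist(a,B_n) <= |a - b| whenever dist(a,C) > eps;
   points of A_n far from C are first pulled back along a segment towards a
   point of A_n near C, which costs only a bounded factor by convexity.  Hence
   dist(a_n,C) drops by a fixed amount at every step until it is below 2 eps,
   where it stays, and dist(b_{n+1},C) <= dist(a_n,C) + 2 eta. *)

From Pilot Require Import Defs.
From HB Require Import structures.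
From mathcomp Require Import all_boot all_order all_algebra.
From mathcomp Require Import all_classical all_reals all_analysis.
From mathcomp Require Import ring lra.
Set Implicit Arguments. Unset Strict Implicit. Unset Printing Implicit Defensive.
Import Order.TTheory GRing.Theory Num.Theory.
Import numFieldNormedType.Exports.
Local Open Scope classical_set_scope.
Local Open Scope ring_scope.

Section Distance.
Variables (R : realType) (X : normedModType R).
Implicit Types (S C D : set X) (x y : X).

Lemma dist_le S x s : S s -> dist x S <= `|x - s|.
Proof.
move=> Ss; apply: ge_inf; last by exists s.
by exists 0 => _ [y _ <-].
Qed.

Lemma dist_ge0 S x : S !=set0 -> 0 <= dist x S.
Proof.
move=> [s Ss]; apply: lb_le_inf; first by exists `|x - s|, s.
by move=> _ [y _ <-].
Qed.

Lemma le_dist S x r : S !=set0 -> (forall s, S s -> r <= `|x - s|) -> r <= dist x S.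
Proof.
move=> [s Ss] h; apply: lb_le_inf; first by exists `|x - s|, s.
by move=> _ [y Sy <-]; exact: h.
Qed.

Lemma dist_lt_ex S x r : S !=set0 -> dist x S < r -> exists2 s, S s & `|x - s| < r.
Proof.
move=> [s Ss] h; have [|_ [y Sy <-] lt] := inf_lt _ h; first by exists `|x - s|, s.
by exists y.
Qed.

Lemma dist_triangle S x y : S !=set0 -> dist x S <= `|x - y| + dist y S.
Proof.
move=> S0; rewrite -lerBlDl; apply: le_dist => // s Ss.
by rewrite lerBlDl (le_trans (dist_le x Ss)) // ler_distD.
Qed.

Lemma ccn_comb C x y (t : R) : ccn C -> C x -> C y -> 0 <= t -> t <= 1 ->
  C (t *: x + (1 - t) *: y).
Proof.
case=> _ cC _ Cx Cy t0 t1.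
by have := cC x y (Itv01 t0 t1) (mem_set Cx) (mem_set Cy); rewrite inE.
Qed.

Lemma ccn_setI C D : ccn C -> ccn D -> C `&` D !=set0 -> ccn (C `&` D).
Proof.
case=> cC vC _ [cD vD _] CD0; split => //; first exact: closedI.
move=> x y l; rewrite !inE => -[Cx Dx] [Cy Dy].
by split; [move: (vC x y l) | move: (vD x y l)]; rewrite !inE; apply.
Qed.

Lemma dist_comb_le D x y (t : R) : ccn D -> 0 <= t -> t <= 1 ->
  dist (t *: x + (1 - t) *: y) D <= t * dist x D + (1 - t) * dist y D.
Proof.
move=> hD t0 t1; have D0 : D !=set0 by case: hD.
apply/ler_addgt0Pr => e e0.
have [u Du xu] : exists2 u, D u & `|x - u| < dist x D + e
  by apply: dist_lt_ex; rewrite ?ltrDl.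
have [v Dv yv] : exists2 v, D v & `|y - v| < dist y D + e
  by apply: dist_lt_ex; rewrite ?ltrDl.
apply: le_trans (dist_le _ (ccn_comb hD Du Dv t0 t1)) _.
have -> : t *: x + (1 - t) *: y - (t *: u + (1 - t) *: v)
    = t *: (x - u) + (1 - t) *: (y - v) by rewrite !scalerBr opprD addrACA.
apply: le_trans (ler_normD _ _) _.
rewrite !normrZ (ger0_norm t0) ger0_norm ?subr_ge0 //.
have h1 : t * `|x - u| <= t * (dist x D + e) by rewrite ler_wpM2l // ltW.
have h2 : (1 - t) * `|y - v| <= (1 - t) * (dist y D + e)
  by rewrite ler_wpM2l ?subr_ge0 // ltW.
lra.
Qed.

Lemma segment_point_dist C D a q (L : R) :
  ccn C -> ccn D -> C a -> C q -> 0 < L -> L <= `|a - q| ->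
  exists a', [/\ C a', `|a' - q| = L
    & dist a' D <= L / `|a - q| * dist a D + dist q D].
Proof.
move=> hC hD Ca Cq L0 La; have aq0 : 0 < `|a - q| := lt_le_trans L0 La.
set t := L / `|a - q|.
have t0 : 0 <= t by rewrite divr_ge0 // ltW.
have t1 : t <= 1 by rewrite ler_pdivrMr // mul1r.
exists (t *: a + (1 - t) *: q); split.
- exact: ccn_comb.
- have -> : t *: a + (1 - t) *: q - q = t *: (a - q).
    by rewrite scalerBl scale1r scalerBr addrCA addrAC subrr add0r.
  by rewrite normrZ ger0_norm // divfK ?gt_eqF.
- apply: le_trans (dist_comb_le _ _ hD t0 t1) _; rewrite lerD2l.
  by rewrite ler_piMl ?subr_ge0 ?gerBl ?dist_ge0 //; case: hD.
Qed.

Lemma dist_le_excess (N : nat) C D c : D !=set0 -> C c -> `|c| <= N%:R ->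
  dist c D <= excess N C D.
Proof.
move=> [d Dd] Cc cN; apply: sup_upper_bound; last by left; exists c.
split; first by exists 0; right.
exists (N%:R + `|d|) => _ [[y [Cy yN] <-]|->]; last by rewrite addr_ge0.
apply: le_trans (dist_le y Dd) _; apply: le_trans (ler_distD 0 _ _) _.
by rewrite sub0r normrN subr0 lerD.
Qed.

Definition close_on (r t : R) (S T : set X) : Prop :=
  forall s, S s -> `|s| <= r -> dist s T <= t.

Lemma AW_cvg_close (Cs : nat -> set X) C (r t : R) :
  (forall j, Cs j !=set0) -> C !=set0 -> AW_cvg Cs C -> 0 < t ->
  \forall j \near \oo, close_on r t (Cs j) C /\ close_on r t C (Cs j).
Proof.
move=> Cs0 C0 CsC t0; have [N _ /(_ N (leqnn N)) rN] := nbhs_infty_ger r.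
apply: filterS ((cvgr0Pnorm_le _).1 (CsC N) t t0) => j /(le_trans (ler_norm _)) hNt.
split=> s Ss sr; apply: le_trans hNt; rewrite le_max.
- by rewrite dist_le_excess ?(le_trans sr).
- by rewrite [X in _ || X]dist_le_excess ?orbT ?(le_trans sr).
Qed.

Lemma bounded_norm_ex S : [bounded x | x in S] -> exists r : R, forall x, S x -> `|x| <= r.
Proof.
by case=> M [_ HM]; exists (M + 1) => x Sx; apply: (HM (M + 1)) => //; lra.
Qed.

End Distance.

Lemma le0_of_le_mul (R : realFieldType) (a b : R) : 0 <= b ->
  (forall t, 0 < t -> t <= 1 -> a <= t * b) -> a <= 0.
Proof.
move=> b0 h; rewrite leNgt; apply/negP => a0.
have ab0 : 0 < a + b by lra.
have := h (a / (a + b)); rewrite divr_gt0 // ler_pdivrMr // mul1r mulrAC.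
rewrite ler_pdivlMr //; nra.
Qed.

Section InnerProduct.
Variables (R : realType) (X : normedModType R) (ip : X -> X -> R).
Hypothesis hip : inner_product ip.
Implicit Types (C : set X) (x y z p : X).

Let ipC x y : ip x y = ip y x. Proof. by case: hip. Qed.
Let ip_lin a x y z : ip (a *: x + y) z = a * ip x z + ip y z.
Proof. by case: hip. Qed.
Let sqr_norm x : `|x| ^+ 2 = ip x x. Proof. by case: hip. Qed.

Let ipDl x y z : ip (x + y) z = ip x z + ip y z.
Proof. by rewrite -[x]scale1r ip_lin mul1r scale1r. Qed.

Let ipZl a x z : ip (a *: x) z = a * ip x z.
Proof.
have ip0 : ip 0 z = 0 by have := ipDl 0 0 z; rewrite addr0; lra.
by rewrite -[a *: x]addr0 ip_lin ip0 addr0.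
Qed.

Lemma sqr_normB x y : `|x - y| ^+ 2 = `|x| ^+ 2 - 2 * ip x y + `|y| ^+ 2.
Proof.
rewrite !sqr_norm ipDl -scaleN1r !ipZl ![ip _ (_ + _)]ipC !ipDl ?ipZl.
by rewrite (ipC y x); ring.
Qed.

Lemma parallelogram x y :
  `|x + y| ^+ 2 + `|x - y| ^+ 2 = 2 * `|x| ^+ 2 + 2 * `|y| ^+ 2.
Proof.
rewrite -[y in x + y]opprK !sqr_normB normrN ipC -[- y]scaleN1r ipZl (ipC y).
ring.
Qed.

Lemma sqr_normBZ x y (t : R) :
  `|x - t *: y| ^+ 2 = `|x| ^+ 2 - 2 * t * ip x y + t ^+ 2 * `|y| ^+ 2.
Proof.
rewrite sqr_normB normrZ exprMn real_normK ?num_real // ipC ipZl (ipC y).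
by rewrite mulrA.
Qed.

Lemma nearest_ip_le0 C x p y : ccn C -> C p ->
  (forall c, C c -> `|x - p| <= `|x - c|) -> C y -> ip (x - p) (y - p) <= 0.
Proof.
move=> hC Cp pmin Cy.
suff : 2 * ip (x - p) (y - p) <= 0 by lra.
apply: (le0_of_le_mul (sqr_ge0 `|y - p|)) => t t0 t1.
have := pmin _ (ccn_comb hC Cy Cp (ltW t0) t1).
have -> : x - (t *: y + (1 - t) *: p) = (x - p) - t *: (y - p).
  by rewrite scalerBl scale1r scalerBr addrCA opprD addrA.
rewrite -(ler_pXn2r (n := 2)) ?nnegrE // sqr_normBZ.
rewrite -subr_ge0 => h.
have : 0 <= t * (t * `|y - p| ^+ 2 - 2 * ip (x - p) (y - p)) by move: h; nra.
by rewrite pmulr_rge0 // subr_ge0.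
Qed.

Lemma nearest_pythagoras C x p y : ccn C -> C p ->
  (forall c, C c -> `|x - p| <= `|x - c|) -> C y ->
  `|y - p| ^+ 2 + `|x - p| ^+ 2 <= `|x - y| ^+ 2.
Proof.
move=> hC Cp pmin Cy; have obtuse := nearest_ip_le0 hC Cp pmin Cy.
have -> : x - y = (x - p) - (y - p) by rewrite opprB addrA subrK.
rewrite [X in _ <= X]sqr_normB; lra.
Qed.

End InnerProduct.

Section Projection.
Variables (R : realType) (X : completeNormedModType R) (ip : X -> X -> R).
Hypothesis hip : inner_product ip.
Implicit Types (C : set X) (x y : X).

Lemma harmonic_near_le (e : R) : 0 < e -> \forall n \near \oo, harmonic n <= e.
Proof.
move=> e0; apply: filterS ((cvgr0Pnorm_le _).1 cvg_harmonic e e0) => n.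
by rewrite ger0_norm // harmonic_ge0.
Qed.

Lemma midpoint_sqr_dist C x u v : ccn C -> C u -> C v ->
  `|u - v| ^+ 2 <= 2 * `|x - u| ^+ 2 + 2 * `|x - v| ^+ 2 - 4 * dist x C ^+ 2.
Proof.
move=> hC Cu Cv; have C0 : C !=set0 by case: hC.
have h20 : 0 <= 2^-1 :> R by rewrite invr_ge0.
have h21 : 2^-1 <= 1 :> R by rewrite invf_le1 // ler1n.
have Cm := ccn_comb hC Cu Cv h20 h21.
have dm : dist x C <= `|x - (2^-1 *: u + (1 - 2^-1) *: v)| := dist_le _ Cm.
have sum : (x - u) + (x - v) = 2 *: (x - (2^-1 *: u + (1 - 2^-1) *: v)).
  rewrite (_ : 1 - 2^-1 = 2^-1 :> R); last by field.
  rewrite scalerBr scalerDr !scalerA mulfV ?pnatr_eq0 // !scale1r.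
  by rewrite scaler_nat mulr2n opprD addrACA.
have diff : (x - u) - (x - v) = v - u by rewrite opprB addrC addrA subrK.
have := parallelogram hip (x - u) (x - v).
rewrite sum diff distrC normrZ exprMn ger0_norm // => <-.
have : dist x C ^+ 2 <= `|x - (2^-1 *: u + (1 - 2^-1) *: v)| ^+ 2.
  by rewrite ler_pXn2r ?nnegrE ?(dist_ge0 x C0).
lra.
Qed.

Lemma nearest_point_exists C x : ccn C -> exists p, C p /\ `|x - p| = dist x C.
Proof.
move=> hC; have C0 : C !=set0 by case: hC.
set d := dist x C; have d0 : 0 <= d := dist_ge0 x C0.
have /choice[c hc] : forall n, exists c, C c /\ `|x - c| < d + harmonic n.
  move=> n; have [c Cc xc] : exists2 c, C c & `|x - c| < d + harmonic n.
    by apply: dist_lt_ex => //; rewrite ltrDl harmonic_gt0.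
  by exists c.
have sqr_le n : `|x - c n| ^+ 2 <= d ^+ 2 + (2 * d + 1) * harmonic n.
  have h0 : 0 <= harmonic n :> R := harmonic_ge0 n.
  have h1 : harmonic n <= 1 :> R by rewrite /= invf_le1 ?ler1n.
  have : `|x - c n| ^+ 2 <= (d + harmonic n) ^+ 2.
    by rewrite ler_pXn2r ?nnegrE ?addr_ge0 // ltW // (hc n).2.
  nra.
have cau : cauchy (c @ \oo).
  apply: cauchy_exP => e e0.
  have eta0 : 0 < e ^+ 2 / (16 * d + 8) by rewrite divr_gt0 ?exprn_gt0 //; lra.
  have [N _ hN] := harmonic_near_le eta0.
  exists (c N), N => // n /= Nn; rewrite -ball_normE /ball_ /=.
  rewrite -(ltr_pXn2r (n := 2)) ?nnegrE ?(ltW e0) //.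
  have := midpoint_sqr_dist x hC (hc N).1 (hc n).1; rewrite -/d.
  have := sqr_le N; have := sqr_le n; have := hN N (leqnn N); have := hN n Nn.
  rewrite !ler_pdivlMr; try lra.
  have := exprn_gt0 2 e0.
  move: (harmonic n) (harmonic N) (e ^+ 2) => hn hN2 e2.
  nra.
have cv : c @ \oo --> lim (c @ \oo) by exact: cauchy_cvg.
have Cl : C (lim (c @ \oo)).
  by apply: (closed_cvg _ _ _ _ cv); [case: hC | apply: nearW => n; case: (hc n)].
exists (lim (c @ \oo)); split=> //; apply/eqP; rewrite eq_le dist_le ?andbT //.
apply/ler_addgt0Pr => e e0.
have de : 0 < d + e by lra.
have : closed_ball x (d + e) (lim (c @ \oo)).
  apply: (closed_cvg _ (@closed_ball_closed _ _ x (d + e)) _ _ cv).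
  have [N _ hN] := harmonic_near_le e0.
  exists N => // n Nn; rewrite closed_ballE // /closed_ball_ /=.
  by have := (hc n).2; have := hN n Nn; lra.
by rewrite closed_ballE.
Qed.

Lemma proj_spec C x : ccn C -> C (Defs.proj C x) /\ `|x - Defs.proj C x| = dist x C.
Proof.
by move=> hC; apply: (xgetPex 0 (@nearest_point_exists C x hC)).
Qed.

Lemma proj_pythagoras C x y : ccn C -> C y ->
  `|y - Defs.proj C x| ^+ 2 + `|x - Defs.proj C x| ^+ 2 <= `|x - y| ^+ 2.
Proof.
move=> hC Cy; have [Cp xp] := @proj_spec C x hC.
by apply: (nearest_pythagoras hip hC Cp) => // c Cc; rewrite xp dist_le.
Qed.

End Projection.

Section PerturbedProjection.
Variables (R : realType) (X : completeNormedModType R) (ip : X -> X -> R).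
Hypothesis hip : inner_product ip.
Variables (S C : set X) (eta : R).
Hypotheses (hS : ccn S) (hC : ccn C) (CS : forall z, C z -> dist z S <= eta).

Lemma dist_proj_sqr_le y : eta <= dist (Defs.proj S y) C ->
  (dist (Defs.proj S y) C - eta) ^+ 2 + `|Defs.proj S y - y| ^+ 2
    <= (dist y C + eta) ^+ 2.
Proof.
set a := Defs.proj S y => etaD.
have C0 : C !=set0 by case: hC.
have [Cz yz] := proj_spec hip y hC; set z := Defs.proj C y in Cz yz.
have [Sq zq] := proj_spec hip z hS; set q := Defs.proj S z in Sq zq.
have zq_eta : `|z - q| <= eta by rewrite zq CS.
have pyth := proj_pythagoras hip y hS Sq; rewrite -/a in pyth.
have yq : `|y - q| <= dist y C + eta.
  by rewrite -yz; apply: le_trans (ler_distD z y q) _; rewrite lerD2l.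
have Da : dist a C - eta <= `|q - a|.
  rewrite lerBlDr distrC; apply: le_trans (dist_le a Cz) _.
  by apply: le_trans (ler_distD q a z) _; rewrite lerD2l distrC.
have h1 : (dist a C - eta) ^+ 2 <= `|q - a| ^+ 2.
  by rewrite ler_pXn2r ?nnegrE ?subr_ge0.
have h2 : `|y - q| ^+ 2 <= (dist y C + eta) ^+ 2.
  by rewrite ler_pXn2r ?nnegrE // (le_trans _ yq).
rewrite distrC; lra.
Qed.

Lemma dist_proj_le x : dist (Defs.proj S x) C <= dist x C + 2 * eta.
Proof.
have C0 : C !=set0 by case: hC.
have d0 := dist_ge0 x C0.
have [z Cz] := C0; have eta0 : 0 <= eta by apply: le_trans (CS Cz); apply: dist_ge0; case: hS.
have [hD|hD] := lerP (dist (Defs.proj S x) C) eta; first lra.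
suff : dist (Defs.proj S x) C - eta <= dist x C + eta by lra.
rewrite -(@ler_pXn2r _ 2) ?nnegrE //; try lra.
have := dist_proj_sqr_le (ltW hD); have := sqr_ge0 `|Defs.proj S x - x|; lra.
Qed.

End PerturbedProjection.

Section PerturbedRegularity.
Variables (R : realType) (X : normedModType R) (A B : set X) (eps delta : R).
Hypotheses (B0 : B !=set0)
  (hreg : forall x, Num.max (dist x A) (dist x B) <= delta ->
    dist x (A `&` B) <= eps).

Lemma dist_setI_le_of_close Bn (r : R) a : 0 < delta -> Bn !=set0 ->
  close_on r (delta / 4) Bn B -> dist a A <= delta / 4 -> `|a| + delta <= r ->
  dist a Bn <= delta / 2 -> dist a (A `&` B) <= eps.
Proof.
move=> delta0 Bn0 BnB aA ar aBn.
have aBn' : dist a Bn < 3 * delta / 4 by lra.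
have [b Bnb ab] := dist_lt_ex Bn0 aBn'.
have br : `|b| <= r.
  have := ler_normD a (b - a); rewrite addrC subrK distrC; lra.
have bB := BnB b Bnb br.
have aB := dist_triangle a b B0.
by apply: hreg; rewrite ge_max; apply/andP; split; lra.
Qed.

Lemma perturbed_regularity An Bn (r L rho : R) z0 q :
  0 < eps -> 0 < delta -> ccn An -> ccn Bn ->
  close_on r (delta / 4) An A -> close_on r (delta / 4) Bn B ->
  (forall z, (A `&` B) z -> `|z| <= rho) -> (A `&` B) z0 ->
  An q -> `|q - z0| <= 1 -> dist q Bn <= delta / 4 ->
  2 * rho + eps + 1 < L -> L + rho + 1 + delta <= r ->
  forall a, An a -> eps < dist a (A `&` B) ->
  delta / (4 * (L + 1)) * dist a (A `&` B) <= dist a Bn.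
Proof.
move=> eps0 delta0 hAn hBn AnA BnB hrho Cz0 Anq qz0 qBn hL hr a Ana aC.
have Bn0 : Bn !=set0 by case: hBn.
have C0 : A `&` B !=set0 by exists z0.
have rz0 := hrho z0 Cz0.
have L0 : 0 < L by have := normr_ge0 z0; lra.
have near_q y : An y -> `|y - q| <= L -> eps < dist y (A `&` B) ->
    delta / 2 < dist y Bn.
  move=> Any yq yC; rewrite ltNge; apply/negP => yBn.
  have yr : `|y| + delta <= r.
    have := lerB_dist y z0; have := ler_distD q y z0; lra.
  have yA : dist y A <= delta / 4 by apply: AnA => //; lra.
  have := dist_setI_le_of_close delta0 Bn0 BnB yA yr yBn; lra.
have far_q y : L <= `|y - q| -> eps < dist y (A `&` B).
  move=> Lyq; suff : L - 2 * rho - 1 <= dist y (A `&` B) by lra.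
  apply: le_dist => // c Cc; have := hrho c Cc.
  have := ler_distD c y q; have := ler_distD z0 c q; have := ler_normB c z0.
  rewrite (distrC z0); lra.
have aq := ler_distD q a z0; have aCz0 := dist_le a Cz0.
have kap0 : 0 < delta / (4 * (L + 1)) by rewrite divr_gt0 // mulr_gt0 // addr_gt0.
have [aqL|Laq] := lerP `|a - q| L.
  have := near_q a Ana aqL aC.
  have : delta / (4 * (L + 1)) * dist a (A `&` B) <= delta / (4 * (L + 1)) * (L + 1).
    by rewrite ler_wpM2l ?(ltW kap0) //; lra.
  have -> : delta / (4 * (L + 1)) * (L + 1) = delta / 4 by field; lra.
  lra.
(* Far from q, pass to the point a' of [q, a] with |a' - q| = L. *)
have [a' [Ana' a'q a'Bn]] := segment_point_dist hAn hBn Ana Anq L0 (ltW Laq).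
have a'C : eps < dist a' (A `&` B) by apply: far_q; rewrite a'q.
have a'qL : `|a' - q| <= L by rewrite a'q.
have := near_q a' Ana' a'qL a'C.
move: a'Bn; rewrite mulrAC.
set s := `|a - q| in aq Laq *; set K := dist a Bn; set D := dist a (A `&` B) in aC aCz0 *.
have s0 : 0 < s by lra.
move=> a'Bn dBn.
have hK : delta * s < 4 * L * K.
  have : delta / 4 < L * K / s by lra.
  by rewrite ltr_pdivlMr // => h; lra.
rewrite mulrAC ler_pdivrMr; last by lra.
have D1 : D <= s + 1 by lra.
have e1 : delta * D <= delta * (s + 1) by rewrite ler_pM2l.
have e2 : L * (delta * (s + 1)) <= delta * s * (L + 1) by nra.
have e3 : delta * s * (L + 1) < 4 * L * K * (L + 1) by rewrite ltr_pM2r //; lra.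
suff h : L * (delta * D) < L * (K * (4 * (L + 1))).
  by apply: ltW; rewrite -(ltr_pM2l L0).
have := ler_wpM2l (ltW L0) e1; lra.
Qed.

End PerturbedRegularity.

Section Contraction.
Variable R : realFieldType.
Implicit Types k u v : R.

(* A rational th < 1 with th^2 (1 + k) >= 1, standing in for 1 / sqrt (1 + k). *)
Definition contraction_ratio k : R := (2 + k) / (2 + 2 * k).

Lemma contraction_ratio_gt0 k : 0 < k -> 0 < contraction_ratio k.
Proof. by move=> k0; rewrite divr_gt0 //; lra. Qed.

Lemma contraction_ratio_lt1 k : 0 < k -> contraction_ratio k < 1.
Proof. by move=> k0; rewrite ltr_pdivrMr ?mul1r; lra. Qed.

Lemma le_contraction_ratio k u v : 0 < k -> 0 <= u -> 0 <= v ->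
  (1 + k) * u ^+ 2 <= v ^+ 2 -> u <= contraction_ratio k * v.
Proof.
move=> k0 u0 v0 h; rewrite leNgt; apply/negP => lt.
have th0 := contraction_ratio_gt0 k0.
have th1 : 1 <= contraction_ratio k ^+ 2 * (1 + k).
  rewrite /contraction_ratio expr_div_n mulrAC ler_pdivlMr ?mul1r; first nra.
  by apply: exprn_gt0; lra.
have : (contraction_ratio k * v) ^+ 2 < u ^+ 2.
  rewrite ltr_pXn2r ?nnegrE //; apply: mulr_ge0 => //; exact: ltW.
rewrite exprMn => lt2.
have : (1 + k) * (contraction_ratio k ^+ 2 * v ^+ 2) < (1 + k) * u ^+ 2.
  by rewrite ltr_pM2l //; lra.
have := sqr_ge0 v; nra.
Qed.

Lemma descent_step (th eps eta d D : R) : 0 <= th <= 1 -> 0 <= eps -> 0 <= eta ->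
  4 * eta <= (1 - th) * eps -> 0 <= d -> D - eta <= th * (d + 3 * eta) ->
  D <= 2 * eps \/ D <= d - (1 - th) * eps.
Proof.
move=> /andP[th0 th1] eps0 eta0 etaeps d0 hD.
have hD' : D <= th * d + (1 - th) * eps by nra.
have [d2|d2] := lerP d (2 * eps); [left | right].
- have : th * d <= th * (2 * eps) by rewrite ler_wpM2l.
  nra.
- have : (1 - th) * (2 * eps) <= (1 - th) * d by rewrite ler_wpM2l ?subr_ge0 // ltW.
  nra.
Qed.

Lemma sqr_descent (kap eps eta d d' D Y : R) : 0 < kap -> 0 < eps -> 0 <= eta ->
  4 * eta <= (1 - contraction_ratio (kap ^+ 2)) * eps -> 0 <= d -> eta <= D ->
  kap * D <= Y -> 0 <= d' -> d' <= d + 2 * eta ->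
  (D - eta) ^+ 2 + Y ^+ 2 <= (d' + eta) ^+ 2 ->
  D <= 2 * eps \/ D <= d - (1 - contraction_ratio (kap ^+ 2)) * eps.
Proof.
move=> kap0 eps0 eta0 etaeps d0 etaD kapY d'0 d'd hsq.
have k0 : 0 < kap ^+ 2 := exprn_gt0 2 kap0.
have th0 := contraction_ratio_gt0 k0; have th1 := contraction_ratio_lt1 k0.
apply: (descent_step _ (ltW eps0) eta0 etaeps d0); first by rewrite !ltW.
apply: (le_contraction_ratio k0); [lra | lra |].
have s1 : kap ^+ 2 * (D - eta) ^+ 2 <= kap ^+ 2 * D ^+ 2.
  by rewrite ler_wpM2l ?sqr_ge0 // ler_pXn2r ?nnegrE //; lra.
have kD0 : 0 <= kap * D by rewrite mulr_ge0 //; lra.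
have s2 : (kap * D) ^+ 2 <= Y ^+ 2 by rewrite ler_pXn2r ?nnegrE //; lra.
have s3 : (d' + eta) ^+ 2 <= (d + 3 * eta) ^+ 2 by rewrite ler_pXn2r ?nnegrE //; lra.
rewrite exprMn in s2; lra.
Qed.

End Contraction.

Lemma near_succ (P : set nat) :
  (\forall n \near \oo, P n) -> \forall n \near \oo, P n.+1.
Proof. by case=> N _ hN; exists N => // n /leqW; exact: hN. Qed.

Lemma near_le_of_descent (R : realType) (u : nat -> R) (c gam : R) :
  0 < gam -> (forall n, 0 <= u n) ->
  (\forall n \near \oo, u n.+1 <= c \/ u n.+1 <= u n - gam) ->
  \forall n \near \oo, u n <= c.
Proof.
move=> gam0 u0 [M _ hM].
have inv j : u (M + j)%N <= c \/ u (M + j)%N <= u M - j%:R * gam.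
  elim: j => [|j IH]; first by right; rewrite addn0 mul0r subr0.
  rewrite addnS -natr1 mulrDl mul1r.
  have [h|h] := hM (M + j)%N (leq_addr _ _); first by left.
  by case: IH => IH; [left | right]; lra.
have [j0 _ hj0] := nbhs_infty_ger (u M / gam + 1).
exists (M + j0)%N => // n Mn; rewrite -(subnKC (leq_trans (leq_addr j0 M) Mn)).
case: (inv (n - M)%N) => // h.
have jn : (j0 <= n - M)%N by rewrite leq_subRL // (leq_trans (leq_addr j0 M) Mn).
have : (u M / gam + 1) * gam <= (n - M)%N%:R * gam.
  by rewrite ler_wpM2r ?(ltW gam0) // hj0.
rewrite mulrDl divfK ?gt_eqF // mul1r; have := u0 (M + (n - M))%N; lra.
Qed.

Section Descent.
Variables (R : realType) (X : completeNormedModType R) (ip : X -> X -> R).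
Hypothesis hip : inner_product ip.
Variables (A B : set X) (eps delta : R).
Hypotheses (hA : ccn A) (hB : ccn B)
  (hreg : forall x, Num.max (dist x A) (dist x B) <= delta ->
    dist x (A `&` B) <= eps).

Lemma pap_step_descent An Bn (rho L r eta : R) z0 (x : X) :
  0 < eps -> 0 < delta -> ccn An -> ccn Bn ->
  (forall z, (A `&` B) z -> `|z| <= rho) -> (A `&` B) z0 ->
  close_on r eta An A -> close_on r eta A An ->
  close_on r eta Bn B -> close_on r eta B Bn ->
  2 * rho + eps + 1 < L -> L + rho + 1 + delta <= r ->
  eta <= 1 -> eta <= delta / 8 ->
  4 * eta <= (1 - contraction_ratio ((delta / (4 * (L + 1))) ^+ 2)) * eps ->
  dist (Defs.proj An (Defs.proj Bn x)) (A `&` B) <= 2 * eps \/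
  dist (Defs.proj An (Defs.proj Bn x)) (A `&` B)
    <= dist x (A `&` B) - (1 - contraction_ratio ((delta / (4 * (L + 1))) ^+ 2)) * eps.
Proof.
move=> eps0 delta0 hAn hBn hrho Cz0 AnA AAn BnB BBn hL hr eta1 eta8.
set C := A `&` B in hrho Cz0 *.
have eta_delta : eta + eta <= delta / 4 by lra.
have eta_delta' : eta <= delta / 4 by lra.
have C0 : C !=set0 by exists z0.
have hC : ccn C := ccn_setI hA hB C0.
have B0 : B !=set0 by case: hB.
have [An0 Bn0] : An !=set0 /\ Bn !=set0 by case: hAn; case: hBn.
have rho0 := le_trans (normr_ge0 z0) (hrho z0 Cz0).
have CAn z : C z -> dist z An <= eta.
  by case=> Az Bz; apply: AAn => //; have := hrho z (conj Az Bz); lra.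
have CBn z : C z -> dist z Bn <= eta.
  by case=> Az Bz; apply: BBn => //; have := hrho z (conj Az Bz); lra.
have eta0 : 0 <= eta := le_trans (dist_ge0 _ An0) (CAn z0 Cz0).
have kap0 : 0 < delta / (4 * (L + 1)) by rewrite divr_gt0 //; lra.
set kap := delta / (4 * (L + 1)) in kap0 *.
have th0 := contraction_ratio_gt0 (exprn_gt0 2 kap0).
move=> etaeps; have eta_eps : eta <= eps.
  by have := mulr_ge0 (ltW th0) (ltW eps0); lra.
set b := Defs.proj Bn x; set a := Defs.proj An b.
have [Bnb _] := proj_spec hip x hBn; have [Ana _] := proj_spec hip b hAn.
have d0 := dist_ge0 x C0; have D0 := dist_ge0 a C0.
have [aC|aC] := lerP (dist a C) eps; first by left; lra.
have [Anq zq] := proj_spec hip z0 hAn; set q := Defs.proj An z0 in Anq zq.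
have qz0 : `|q - z0| <= eta by rewrite distrC zq; exact: CAn.
have qBn : dist q Bn <= delta / 4.
  by apply: le_trans (dist_triangle q z0 Bn0) (le_trans (lerD qz0 (CBn z0 Cz0)) _).
have kapD : kap * dist a C <= `|a - b|.
  apply: le_trans (dist_le a Bnb).
  apply: (perturbed_regularity B0 hreg eps0 delta0 hAn hBn _ _ hrho Cz0 Anq _ qBn hL hr Ana aC).
  - by move=> s Ans sr; apply: le_trans (AnA s Ans sr) eta_delta'.
  - by move=> s Bns sr; apply: le_trans (BnB s Bns sr) eta_delta'.
  - exact: le_trans qz0 eta1.
have bC : dist b C <= dist x C + 2 * eta.
  exact (dist_proj_le hip hBn hC CBn x).
have etaD : eta <= dist a C := le_trans eta_eps (ltW aC).
have sqa : (dist a C - eta) ^+ 2 + `|a - b| ^+ 2 <= (dist b C + eta) ^+ 2.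
  exact (dist_proj_sqr_le hip hAn hC CAn etaD).
exact: (sqr_descent kap0 eps0 eta0 etaeps d0 etaD kapD (dist_ge0 b C0) bC sqa).
Qed.

End Descent.

Section PerturbedAlternatingProjections.
Variables (R : realType) (X : completeNormedModType R) (ip : X -> X -> R).
Hypothesis hip : inner_product ip.
Variables (A B : set X) (As Bs : nat -> set X) (a0 : X).
Hypotheses (hA : ccn A) (hB : ccn B) (hAB0 : A `&` B !=set0)
  (hABb : [bounded x | x in A `&` B]) (hreg : regular A B)
  (hAs : forall n, ccn (As n)) (hBs : forall n, ccn (Bs n))
  (awA : AW_cvg As A) (awB : AW_cvg Bs B).

Let As0 n : As n !=set0. Proof. by case: (hAs n). Qed.
Let Bs0 n : Bs n !=set0. Proof. by case: (hBs n). Qed.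
Let A0 : A !=set0. Proof. by case: hA. Qed.
Let B0 : B !=set0. Proof. by case: hB. Qed.

Lemma pap_a_descent (e : R) : 0 < e -> exists2 gam : R, 0 < gam &
  \forall m \near \oo, dist (pap_a As Bs a0 m.+1) (A `&` B) <= e \/
    dist (pap_a As Bs a0 m.+1) (A `&` B) <= dist (pap_a As Bs a0 m) (A `&` B) - gam.
Proof.
move=> e0; have eps0 : 0 < e / 2 by rewrite divr_gt0.
have [delta delta0 hdelta] := hreg eps0.
have [rho hrho] := bounded_norm_ex hABb.
have [z0 Cz0] := hAB0; have rho0 := le_trans (normr_ge0 z0) (hrho z0 Cz0).
set L := 2 * rho + e / 2 + 2; set r := L + rho + 1 + delta.
have L0 : 0 < L + 1 by rewrite /L; lra.
have kap0 : 0 < delta / (4 * (L + 1)) by rewrite divr_gt0 ?mulr_gt0.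
set th := contraction_ratio ((delta / (4 * (L + 1))) ^+ 2).
have th1 : th < 1 by apply/contraction_ratio_lt1/exprn_gt0.
have gam0 : 0 < (1 - th) * (e / 2) by rewrite mulr_gt0 // subr_gt0.
set eta := Num.min 1 (Num.min (delta / 8) ((1 - th) * (e / 2) / 4)).
have eta0 : 0 < eta by rewrite !lt_min ltr01 !divr_gt0.
exists ((1 - th) * (e / 2)) => //.
have nA := near_succ (AW_cvg_close r As0 A0 awA eta0).
have nB := near_succ (AW_cvg_close r Bs0 B0 awB eta0).
apply: filterS2 nA nB => m [AmA AAm] [BmB BBm].
rewrite [X in _ <= X \/ _](_ : e = 2 * (e / 2)); last by field.
apply: (pap_step_descent hip hA hB hdelta (pap_a As Bs a0 m) eps0 delta0
  (hAs m.+1) (hBs m.+1) hrho Cz0 AmA AAm BmB BBm).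
- rewrite /L; lra.
- exact: lexx.
- by rewrite /eta ge_min lexx.
- by rewrite /eta !ge_min lexx orbT.
- by rewrite mulrC -ler_pdivlMr // /eta !ge_min lexx !orbT.
Qed.

Lemma pap_a_dist_cvg0 : (fun n => dist (pap_a As Bs a0 n) (A `&` B)) @ \oo --> 0.
Proof.
apply/cvgr0Pnorm_le => e e0; have [gam gam0 hdesc] := pap_a_descent e0.
have D0 n : 0 <= dist (pap_a As Bs a0 n) (A `&` B) by exact: dist_ge0.
apply: filterS (near_le_of_descent gam0 D0 hdesc) => n.
by rewrite ger0_norm.
Qed.

Lemma pap_b_dist_cvg0 : (fun n => dist (pap_b As Bs a0 n) (A `&` B)) @ \oo --> 0.
Proof.
apply/cvgr0Pnorm_le => e e0; apply: near_inftyS.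
have e2 : 0 < e / 2 by rewrite divr_gt0.
have e4 : 0 < e / 4 by rewrite divr_gt0.
have [rho hrho] := bounded_norm_ex hABb.
have nB := near_succ (AW_cvg_close rho Bs0 B0 awB e4).
have /cvgr0Pnorm_le/(_ _ e2) na := pap_a_dist_cvg0.
have hC : ccn (A `&` B) := ccn_setI hA hB hAB0.
apply: filterS2 nB na => m [_ BBm] am.
have CBm z : (A `&` B) z -> dist z (Bs m.+1) <= e / 4.
  by case=> Az Bz; apply: BBm => //; exact: hrho.
have : dist (pap_b As Bs a0 m.+1) (A `&` B)
    <= dist (pap_a As Bs a0 m) (A `&` B) + 2 * (e / 4).
  exact (dist_proj_le hip (hBs m.+1) hC CBm (pap_a As Bs a0 m)).
rewrite !ger0_norm ?dist_ge0 // in am *; lra.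
Qed.

End PerturbedAlternatingProjections.

Unset Implicit Arguments.

Theorem corollary4p11 (R : realType) (X : completeNormedModType R)
  (ip : X -> X -> R) (hip : inner_product ip)
  (A B : set X) (hA : ccn A) (hB : ccn B)
  (hAB0 : A `&` B !=set0) (hABb : [bounded x | x in A `&` B])
  (hreg : regular A B) :
  forall (As Bs : nat -> set X),
    (forall n, ccn (As n)) -> (forall n, ccn (Bs n)) ->
    AW_cvg As A -> AW_cvg Bs B ->
  forall a0 : X,
    (fun n => dist (pap_a As Bs a0 n) (A `&` B)) @ \oo --> (0 : R) /\
    (fun n => dist (pap_b As Bs a0 n) (A `&` B)) @ \oo --> (0 : R).
Proof.
move=> As Bs hAs hBs awA awB a0; split.
- exact (pap_a_dist_cvg0 hip a0 hA hB hAB0 hABb hreg hAs hBs awA awB).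
- exact (pap_b_dist_cvg0 hip a0 hA hB hAB0 hABb hreg hAs hBs awA awB).
Qed.
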